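(* Let $A$ be an infinite set, fix $z\in A$, $A'=A\setminus\{z\}$, and $p\in[1,\infty)$. Let $\alpha^n=a_1^na_2^n\ldots\in N(A)$ for $n\in\mathbb{N}^*$, $x_n=p_p(\alpha^n)$, and let $\alpha=a_1a_2\ldots\in N(A)$, $x=p_p(\alpha)$. (i) If the sequence $(a_n)_{n\in\mathbb{N}^*}$ is not eventually constant (for every $q\in\mathbb{N}^*$ it is not constant from index $q$ on), then $\lim_{n\to\infty}\|x_n-x\|_p=0$ if and only if $\lim_{n\to\infty}\alpha^n=\alpha$ in $N(A)$. (ii) If there are $n_0\in\mathbb{N}^*$, $n_0\ge2$, and $a,b\in A$, $a\neq b$, with $\alpha=a_1\ldots a_{n_0-1}abbb\ldots$ (the $n_0$-th letter is $a$ and all later letters are $b$), then $\lim_{n\to\infty}\|x_n-x\|_p=0$ if and only if for every $m\in\mathbb{N}^*$ with $m>n_0+1$ there exists $l_m\in\mathbb{N}^*$ such that for every $l\ge l_m$ one of the following holds: ($\alpha$) $a_i^l=a_i$ for $i=1,\ldots,n_0-1$, $a_{n_0}^l=a$, and $a_{n_0+1}^l=\cdots=a_m^l=b$; ($\beta$) $a_i^l=a_i$ for $i=1,\ldots,n_0-1$, $a_{n_0}^l=b$, and $a_{n_0+1}^l=\cdots=a_m^l=a$.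
   Context: $l^p(A)$ is the set of families $x=(x_c)_{c\in A'}$ of real numbers with $x_c=0$ for all but countably many $c$ and $\sum_c|x_c|^p<\infty$, with norm $\|x\|_p=(\sum_c|x_c|^p)^{1/p}$. $N(A)$ is the set of all sequences $\alpha=a_1a_2a_3\ldots$ with $a_k\in A$, with metric $d(v,v')=1/k$ where $k$ is the first index at which $v,v'$ differ, and $d(v,v)=0$. The map $p_p:N(A)\to l^p(A)$ is $p_p(\alpha)=(\alpha_c)_{c\in A'}$ where, for $\alpha=a_1a_2\ldots$, $\alpha_c=\sum_{k:\,a_k=c}2^{-k}$ (and $\alpha_c=0$ if no $a_k$ equals $c$). *)

From HB Require Import structures.
From mathcomp Require Import all_boot all_order all_algebra.
From mathcomp Require Import all_classical all_reals all_analysis.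
Set Implicit Arguments. Unset Strict Implicit. Unset Printing Implicit Defensive.
Import Order.TTheory GRing.Theory Num.Theory.
Import numFieldNormedType.Exports.
Local Open Scope classical_set_scope.
Local Open Scope ring_scope.

(* Elements of N(A) are sequences a_1 a_2 ... ; we represent them as
   functions nat -> A, using only the indices k >= 1 (the value at 0 is
   irrelevant and never used). *)

Definition coord {R : realType} {A : Type} (a : nat -> A) (c : A) : R :=
  limn (fun n : nat => \sum_(1 <= k < n) (if `[< a k = c >] then (2%:R ^- k : R) else 0)).

(* p_p(alpha) = (alpha_c)_{c in A'}; we record it as a function on A,
   the coordinate z being discarded by the l^p norm below. *)
Definition pp {R : realType} {A : Type} (a : nat -> A) : A -> R :=
  fun c => coord a c.

Definition lp_dist {R : realType} {A : choiceType} (z : A) (p : R)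
  (x y : A -> R) : \bar R :=
  poweR (esum [set c | c <> z] (fun c => ((`|x c - y c|) `^ p)%:E)) p^-1.

Definition first_diff {A : Type} (u v : nat -> A)
  (h : exists k, `[< (1 <= k)%N /\ u k <> v k >]) : nat :=
  ex_minn h.

Definition dN {R : realType} {A : Type} (u v : nat -> A) : R :=
  match pselect (exists k, `[< (1 <= k)%N /\ u k <> v k >]) with
  | left h => ((first_diff h)%:R)^-1
  | right _ => 0
  end.

Definition cvg_NA {R : realType} {A : Type} (an : nat -> nat -> A) (a : nat -> A) :=
  (fun n : nat => (dN (an n) a : R)) @ \oo --> (0 : R).

Definition cvg_lp {R : realType} {A : choiceType} (z : A) (p : R)
  (an : nat -> nat -> A) (a : nat -> A) :=
  ((fun n => lp_dist z p (pp (an n)) (pp a)) @ \oo --> 0%E).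

(* If two words agree up to position m, all their coordinates differ only through the tails, and
   the total mass of these differences over any finite set of letters is O(2^-m); hence
   prefix convergence gives l^p convergence.  Conversely, let u and v first differ at k and let
   j > k be a position with v_j <> u_k.  Either the letter u_k <> z carries weight 2^-k in u, which
   v cannot collect after k without missing position j; or u_k = z is invisible, and then the
   letters v_k, v_j carry 2^-k + 2^-j in v while u has at most 2^-k for both together.  In every
   case some coordinate c <> z differs by at least 2^-(j+2), so coordinatewise convergence forces
   prefix agreement whenever alpha has two distinct letters beyond every position.  The only
   obstruction is the identity 2^-n0 = sum_(k > n0) 2^-k: the words w a b b b ... and w b a a a ...
   have the same image, which produces the two alternatives of part (ii). *)

From Pilot Require Import Defs.
From HB Require Import structures.
From mathcomp Require Import all_boot all_order all_algebra.
From mathcomp Require Import all_classical all_reals all_analysis.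
From mathcomp Require Import lra zify.
From mathcomp Require finmap.
Import Order.TTheory GRing.Theory Num.Theory.
Import numFieldNormedType.Exports.
Local Open Scope classical_set_scope.
Local Open Scope ring_scope.

Set Implicit Arguments. Unset Strict Implicit. Unset Printing Implicit Defensive.

Section DyadicCoordinates.
Variable R : realType.

Definition wt (k : nat) : R := 2%:R ^- k.

Lemma wt_gt0 k : 0 < wt k.
Proof. by rewrite invr_gt0 exprn_gt0. Qed.

Lemma wt_ge0 k : 0 <= wt k.
Proof. exact/ltW/wt_gt0. Qed.

Lemma wtS k : wt k = 2 * wt k.+1.
Proof. by rewrite /wt exprS invfM mulrA divff ?mul1r. Qed.

Lemma wtD m n : wt (m + n) = wt m * wt n.
Proof. by rewrite /wt exprD invfM. Qed.

Lemma wt_le m n : (m <= n)%N -> wt n <= wt m.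
Proof.
by move=> mn; rewrite lef_pV2 ?posrE ?exprn_gt0 // ler_eXn2l // ltr1n.
Qed.

Lemma sum_wt k n : (k <= n)%N -> \sum_(k <= i < n) wt i = 2 * wt k - 2 * wt n.
Proof.
elim: n => [|n IH]; first by rewrite leqn0 => /eqP->; rewrite big_geq // subrr.
rewrite leq_eqVlt => /orP[/eqP->|]; first by rewrite big_geq // subrr.
by rewrite ltnS => kn; rewrite big_nat_recr //= IH // [wt n]wtS; lra.
Qed.

Lemma natr_wt_le1 n : n%:R * wt n <= 1.
Proof.
rewrite ler_pdivrMr ?exprn_gt0 // mul1r -natrX ler_nat.
exact/ltnW/ltn_expl.
Qed.

Lemma wt_le_invS n : wt n <= n.+1%:R^-1.
Proof.
by rewrite lef_pV2 ?posrE ?exprn_gt0 // -natrX ler_nat ltn_expl.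
Qed.

Lemma near_wt_lt (e : R) : 0 < e -> \forall n \near \oo, wt n < e.
Proof.
move=> e0; near=> n; apply: le_lt_trans (wt_le_invS n) _.
by near: n; exact: (near_infty_natSinv_lt (PosNum e0)).
Unshelve. all: by end_near.
Qed.

Lemma eq0_of_norm_le_wt (r K : R) n0 : (forall N, (n0 < N)%N -> `|r| <= K * wt N) -> r = 0.
Proof.
move=> small; apply/eqP; rewrite -normr_le0; apply: contrapT => /negP; rewrite -ltNge => r0.
have K0 : 0 < `|K| + 1 by rewrite ltr_pwDr.
have [N _ wN] := near_wt_lt (divr_gt0 r0 K0).
have N0 : (n0 < maxn N n0.+1)%N by rewrite leq_max leqnn orbT.
have := small _ N0; have := wN _ (leq_maxl N n0.+1); rewrite ltr_pdivlMr // => lt le.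
have := le_trans le (ler_wpM2r (wt_ge0 _) (ler_norm K)).
have := wt_ge0 (maxn N n0.+1); lra.
Qed.

Lemma ler_sum_nat_one (g : nat -> R) k i n : (forall l, 0 <= g l) ->
  (k <= i < n)%N -> g i <= \sum_(k <= l < n) g l.
Proof.
move=> g0 /andP[ki iN].
rewrite (@big_cat_nat _ _ _ i) ?(ltnW iN) //= [X in _ + X]big_ltn //= addrCA lerDl.
by rewrite addr_ge0 // sumr_ge0.
Qed.

Lemma ler_sum_nat_two (g : nat -> R) k i j n : (forall l, 0 <= g l) ->
  (k <= i)%N -> (i < j < n)%N -> g i + g j <= \sum_(k <= l < n) g l.
Proof.
move=> g0 ki /andP[ij jn].
rewrite (@big_cat_nat _ _ _ j) ?(ltnW jn) ?(leq_trans ki (ltnW ij)) //=.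
by apply: lerD; apply: ler_sum_nat_one; rewrite ?ki ?ij ?leqnn.
Qed.

Lemma sum_wt_miss (g : nat -> R) k i N : (forall l, g l <= wt l) ->
  (k <= i < N)%N -> g i = 0 -> \sum_(k <= l < N) g l + wt i <= \sum_(k <= l < N) wt l.
Proof.
move=> gw iN gi0; rewrite -lerBrDl -sumrB.
have -> : wt i = wt i - g i by rewrite gi0 subr0.
by apply: (ler_sum_nat_one (g := fun l => wt l - g l)) => // l; rewrite subr_ge0.
Qed.

Lemma sum_wt_miss2 (g : nat -> R) k i j N : (forall l, g l <= wt l) ->
  (k <= i)%N -> (i < j < N)%N -> g i = 0 -> g j = 0 ->
  \sum_(k <= l < N) g l + wt i + wt j <= \sum_(k <= l < N) wt l.
Proof.
move=> gw ki ijN gi0 gj0; rewrite -addrA -lerBrDl -sumrB.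
have -> : wt i + wt j = (wt i - g i) + (wt j - g j) by rewrite gi0 gj0 !subr0.
by apply: (ler_sum_nat_two (g := fun l => wt l - g l)) => // l; rewrite subr_ge0.
Qed.

Section Terms.
Variable A : Type.
Implicit Types (u v : nat -> A) (c e : A).
Local Notation coord := (@Defs.coord R A).

Definition coord_term u c i : R := if `[< u i = c >] then wt i else 0.

Definition coord_psum u c k n := \sum_(k <= i < n) coord_term u c i.

Lemma coord_termT u c i : u i = c -> coord_term u c i = wt i.
Proof. by move=> h; rewrite /coord_term asboolT. Qed.

Lemma coord_termF u c i : u i <> c -> coord_term u c i = 0.
Proof. by move=> h; rewrite /coord_term asboolF. Qed.

Lemma coord_term_ge0 u c i : 0 <= coord_term u c i.
Proof. by rewrite /coord_term; case: ifP => _ //; exact: wt_ge0. Qed.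

Lemma coord_term_le u c i : coord_term u c i <= wt i.
Proof. by rewrite /coord_term; case: ifP => _ //; exact: wt_ge0. Qed.

Lemma coord_termD_le u c e i : c <> e -> coord_term u c i + coord_term u e i <= wt i.
Proof.
move=> ce; have [uc|uc] := pselect (u i = c).
  by rewrite coord_termT // (@coord_termF u e) ?addr0 // uc.
by rewrite coord_termF // add0r coord_term_le.
Qed.

Lemma coord_psum_ge0 u c k n : 0 <= coord_psum u c k n.
Proof. by apply: sumr_ge0 => i _; exact: coord_term_ge0. Qed.

Lemma coord_psum_le u c k n : (k <= n)%N -> coord_psum u c k n <= 2 * wt k - 2 * wt n.
Proof. by move=> kn; rewrite -sum_wt //; apply: ler_sum_nat => i _; exact: coord_term_le. Qed.

Lemma coord_psum_split u c k m n : (k <= m <= n)%N ->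
  coord_psum u c k n = coord_psum u c k m + coord_psum u c m n.
Proof. by move=> /andP[km mn]; rewrite /coord_psum -big_cat_nat. Qed.

Lemma coord_psum_nd u c k : nondecreasing_seq (coord_psum u c k).
Proof.
apply/nondecreasing_seqP => n; have [kn|nk] := leqP k n.
  by rewrite /coord_psum big_nat_recr //= lerDl coord_term_ge0.
by rewrite /coord_psum !big_geq // ltnW.
Qed.

Lemma coord_psum_le_tail u c k N n : (k <= N)%N ->
  coord_psum u c k n <= coord_psum u c k N + 2 * wt N.
Proof.
move=> kN; have [nN|Nn] := leqP n N.
  by apply: le_trans (coord_psum_nd u c k nN) _; rewrite lerDl mulr_ge0 ?wt_ge0.
rewrite (@coord_psum_split _ _ _ N) ?kN 1?ltnW // lerD2l.
by apply: le_trans (coord_psum_le _ _ (ltnW Nn)) _; rewrite lerBlDr lerDl mulr_ge0 ?wt_ge0.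
Qed.

Lemma coord_bounds u c N : (1 <= N)%N ->
  coord_psum u c 1 N <= coord u c <= coord_psum u c 1 N + 2 * wt N.
Proof.
move=> N1; have nd := coord_psum_nd u c 1.
have ub n : coord_psum u c 1 n <= coord_psum u c 1 N + 2 * wt N.
  exact: coord_psum_le_tail.
have cv : cvgn (coord_psum u c 1).
  by apply/cvg_ex; eexists; apply: nondecreasing_cvgn => //; exists (coord_psum u c 1 N + 2 * wt N) => _ [n _ <-].
rewrite (nondecreasing_cvgn_le nd cv) /=.
by apply: limr_le => //; near=> n; exact: ub.
Unshelve. all: by end_near.
Qed.

Lemma coord_ge0 u c : 0 <= coord u c.
Proof. by have /andP[+ _] := coord_bounds u c (leqnn 1); rewrite /coord_psum big_geq. Qed.

Lemma coord_le1 u c : coord u c <= 1.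
Proof.
have /andP[_] := coord_bounds u c (leqnn 1).
by rewrite /coord_psum big_geq // add0r /wt expr1 mulfV.
Qed.

Definition agree_below u v k := forall i, (1 <= i < k)%N -> u i = v i.

Lemma coord_diff_bounds u v c k N : (1 <= k <= N)%N -> agree_below u v k ->
  `|coord u c - coord v c - (coord_psum u c k N - coord_psum v c k N)| <= 2 * wt N.
Proof.
move=> /andP[k1 kN] huv; have N1 := leq_trans k1 kN.
have /andP[u1 u2] := coord_bounds u c N1; have /andP[v1 v2] := coord_bounds v c N1.
have same_prefix : coord_psum u c 1 k = coord_psum v c 1 k.
  by apply: eq_big_nat => i /huv; rewrite /coord_term => ->.
move: u1 u2 v1 v2; rewrite (@coord_psum_split u c 1 k N) ?(@coord_psum_split v c 1 k N) ?k1 // same_prefix.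
by rewrite ler_norml => *; apply/andP; split; lra.
Qed.

Lemma coord_psum_ge u c k i N : (k <= i < N)%N -> u i = c -> wt i <= coord_psum u c k N.
Proof.
move=> iN uic; rewrite -(coord_termT uic).
by apply: ler_sum_nat_one => // l; exact: coord_term_ge0.
Qed.

Lemma coord_gap_own u v k j : (1 <= k < j)%N -> agree_below u v k ->
  u k <> v k -> v j <> u k -> wt j <= coord u (u k) - coord v (u k).
Proof.
move=> /andP[k1 kj] huv ukv vju; set c := u k.
have kN : (1 <= k <= j.+1)%N by lia.
have kkN : (k <= k < j.+1)%N by lia.
have D := coord_diff_bounds c kN huv; rewrite ler_norml in D.
have Pu := coord_psum_ge (u := u) kkN (erefl c).
have Pv := sum_wt_miss2 (coord_term_le v c) (leqnn k) (introT andP (conj kj (ltnSn j)))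
  (coord_termF (nesym ukv)) (coord_termF vju).
have := sum_wt (proj2 (andP kN)); move: D Pu Pv; rewrite /coord_psum; lra.
Qed.

Lemma coord_gap_other u v k j : (1 <= k < j)%N -> agree_below u v k ->
  u k <> v k -> v j <> u k ->
  exists2 c, c = v k \/ c = v j & wt j.+2 <= coord v c - coord u c.
Proof.
move=> /andP[k1 kj] huv ukv vju; set N := j.+2.
have kN : (1 <= k <= N)%N by rewrite /N; lia.
have kkN : (k <= k < N)%N by rewrite /N; lia.
have jN : (j < N)%N by rewrite /N.
have := sum_wt (proj2 (andP kN)); have := wtS j; have := wtS j.+1; have := wt_gt0 N.
move=> wN0 wj1 wj T.
have D c := coord_diff_bounds c kN huv.
have Pvk := coord_psum_ge kkN (erefl (v k)).
have [vjk|vjk] := pselect (v j = v k).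
  exists (v k); [by left | have Dk := D (v k); rewrite ler_norml in Dk].
  have Pv := ler_sum_nat_two (coord_term_ge0 v (v k)) (leqnn k) (introT andP (conj kj jN)).
  rewrite coord_termT // (coord_termT vjk) in Pv.
  have Pu := sum_wt_miss (coord_term_le u (v k)) kkN (coord_termF ukv).
  by move: Dk Pv Pu; rewrite /coord_psum; lra.
have Pvj := coord_psum_ge (introT andP (conj (ltnW kj) jN)) (erefl (v j)).
have Pu : coord_psum u (v k) k N + coord_psum u (v j) k N + wt k <= \sum_(k <= l < N) wt l.
  rewrite /coord_psum -big_split /=; apply: sum_wt_miss _ kkN _.
    by move=> l; exact: coord_termD_le (nesym vjk).
  by rewrite !coord_termF ?addr0 // => /esym.
have Dk := D (v k); have Dj := D (v j); rewrite ler_norml in Dk; rewrite ler_norml in Dj.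
have [hk|hk] := lerP (wt N) (coord v (v k) - coord u (v k)); first by exists (v k); [left|].
exists (v j); first by right.
by move: Dk Dj Pu Pvk Pvj; rewrite /coord_psum; lra.
Qed.

Lemma coord_gap (z : A) u v k j : (1 <= k < j)%N -> agree_below u v k ->
  u k <> v k -> v j <> u k -> exists2 c, c <> z & wt j.+2 <= `|coord u c - coord v c|.
Proof.
move=> kj huv ukv vju; have [ukz|ukz] := pselect (u k = z).
  have [c vc gap] := coord_gap_other kj huv ukv vju.
  exists c; first by rewrite -ukz; case: vc => ->; [exact: nesym|].
  by rewrite distrC (le_trans gap (ler_norm _)).
exists (u k) => //; apply: le_trans (ler_norm _).
exact: le_trans (wt_le (leqW (leqnSn j))) (coord_gap_own kj huv ukv vju).
Qed.

Lemma agree_below_le u v m n : (m <= n)%N -> agree_below u v n -> agree_below u v m.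
Proof. by move=> mn huv i /andP[i1 im]; apply: huv; rewrite i1 (leq_trans im). Qed.

Lemma agree_below_ind u v m :
  (forall k, (1 <= k < m)%N -> agree_below u v k -> u k = v k) -> agree_below u v m.
Proof.
elim: m => [_ i /andP[_]//|m IH step i /andP[i1]].
have below : agree_below u v m.
  by apply: IH => k /andP[k1 km]; apply: step; rewrite k1 ltnW.
rewrite ltnS leq_eqVlt => /orP[/eqP im|im]; last by apply: below; rewrite i1.
by rewrite im in i1 *; apply: step; rewrite ?i1 ?ltnSn.
Qed.

Lemma eq_of_coord_close (z : A) u v d k j :
  (forall c, c <> z -> `|coord u c - coord v c| < d) -> d <= wt j.+2 ->
  (1 <= k < j)%N -> agree_below u v k -> v j <> u k -> u k = v k.
Proof.
move=> close dj kj huv vju; apply: contrapT => ukv.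
have [c cz] := coord_gap z kj huv ukv vju.
by apply/negP; rewrite -ltNge (lt_le_trans (close c cz) dj).
Qed.

Lemma eq_of_coord_close2 (z : A) u v d k j1 j2 :
  (forall c, c <> z -> `|coord u c - coord v c| < d) -> d <= wt j2.+2 ->
  (1 <= k < j1)%N -> (j1 < j2)%N -> agree_below u v k -> v j1 <> v j2 -> u k = v k.
Proof.
move=> close dj /andP[k1 kj1] j12 huv vj12.
have [vju|vju] := pselect (v j1 = u k).
  apply: eq_of_coord_close close dj _ huv _; first by rewrite k1 (ltn_trans kj1).
  by rewrite -vju => /esym.
apply: eq_of_coord_close close _ _ huv vju; last by rewrite k1.
by apply: le_trans dj (wt_le _); rewrite ltnS ltnW.
Qed.

Lemma coord_psum_const_tail u c n0 N e : (n0 < N)%N ->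
  (forall i, (n0 < i)%N -> u i = e) ->
  coord_psum u c n0 N = coord_term u c n0 + (if `[< e = c >] then wt n0 - 2 * wt N else 0).
Proof.
move=> n0N tail; rewrite /coord_psum big_ltn //; congr (_ + _).
under eq_big_nat => i /andP[n0i _] do rewrite /coord_term tail //.
by case: ifP => _; [rewrite sum_wt // -wtS | rewrite big1].
Qed.

Lemma agree_below_of_coord_close (z : A) u v d m j1 j2 :
  (forall c, c <> z -> `|coord u c - coord v c| < d) -> d <= wt j2.+2 ->
  (m <= j1 < j2)%N -> v j1 <> v j2 -> agree_below u v m.
Proof.
move=> close dj /andP[mj1 j12] vj12; apply: agree_below_ind => k /andP[k1 km] huv.
by apply: eq_of_coord_close2 close dj _ j12 huv vj12; rewrite k1 (leq_trans km).
Qed.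

Lemma agree_below_of_coord_close_const (z : A) u v d n0 m :
  (forall c, c <> z -> `|coord u c - coord v c| < d) -> d <= wt m.+2 ->
  agree_below u v n0.+1 -> (forall i, (n0 < i)%N -> v i.+1 = v i) -> agree_below u v m.
Proof.
move=> close dm prefix const; apply: agree_below_ind => k /andP[k1 km] huv.
have [kn0|n0k] := leqP k n0; first by apply: prefix; rewrite k1 ltnS.
have [//|ukv] := pselect (u k = v k).
have dk : d <= wt k.+3 by apply: le_trans dm (wt_le _); rewrite !ltnS.
apply: eq_of_coord_close close dk _ huv _; first by rewrite k1 ltnSn.
by rewrite const // => /esym /ukv.
Qed.

Definition two_tail u n0 e f : nat -> A :=
  fun i => if (i < n0)%N then u i else if i == n0 then e else f.

Lemma coord_two_tail_swap u n0 e f c : (1 <= n0)%N ->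
  coord (two_tail u n0 f e) c = coord (two_tail u n0 e f) c.
Proof.
move=> n01; set v := two_tail u n0 f e; set w := two_tail u n0 e f.
apply/eqP; rewrite -subr_eq0; apply/eqP.
apply: (@eq0_of_norm_le_wt _ 4 n0) => N n0N.
have prefix : agree_below v w n0 by move=> i /andP[_ ilt]; rewrite /v /w /two_tail ilt.
have D := coord_diff_bounds c (introT andP (conj n01 (ltnW n0N))) prefix.
have tail g h i : (n0 < i)%N -> two_tail u n0 g h i = h.
  by move=> n0i; rewrite /two_tail ltnNge (ltnW n0i) gtn_eqF.
rewrite (coord_psum_const_tail c n0N (tail f e)) (coord_psum_const_tail c n0N (tail e f)) in D.
rewrite /coord_term /v /w /two_tail ltnn eqxx in D.
have := wt_ge0 N; move: D; rewrite ler_norml.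
by case: (asboolP (e = c)) => _; case: (asboolP (f = c)) => _ D w0; rewrite ler_norml; lra.
Qed.

End Terms.

Section PrefixMetric.
Variable A : Type.
Implicit Types u v : nat -> A.

Lemma dN_ge0 u v : 0 <= dN (R:=R) u v.
Proof. by rewrite /dN; case: pselect => // h; rewrite invr_ge0. Qed.

Lemma dN_le_agree u v m : agree_below u v m.+1 -> dN (R:=R) u v <= m.+1%:R^-1.
Proof.
move=> huv; rewrite /dN; case: pselect => [h|_]; last by rewrite invr_ge0.
rewrite /Defs.first_diff; case: (ex_minnP h) => k /asboolP[k1 ukv] _.
rewrite lef_pV2 ?posrE ?ltr0n // ler_nat ltnNge; apply/negP => km.
by apply: ukv; apply: huv; rewrite k1.
Qed.

Lemma agree_of_dN_lt u v m : dN (R:=R) u v < m.+1%:R^-1 -> agree_below u v m.+2.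
Proof.
move=> hd i /andP[i1 im]; apply: contrapT => ne; move: hd; rewrite /dN.
case: pselect => [h|h]; last by exfalso; apply: h; exists i; apply/asboolP.
rewrite /Defs.first_diff; case: (ex_minnP h) => k /asboolP[k1 _] kmin.
have ki : (k <= i)%N by apply: kmin; apply/asboolP.
by apply/negP; rewrite -leNgt lef_pV2 ?posrE ?ltr0n // ler_nat (leq_trans ki).
Qed.

Lemma cvg_NAP (an : nat -> nat -> A) a :
  cvg_NA (R:=R) an a <-> forall m, \forall l \near \oo, agree_below (an l) a m.
Proof.
split=> [/cvgrPdist_lt cv m|agree].
  have m0 : 0 < m.+1%:R^-1 :> R by rewrite invr_gt0.
  have [L _ HL] := cv _ m0.
  exists L => // l /HL; rewrite /= sub0r normrN ger0_norm; last exact: dN_ge0.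
  by move=> /agree_of_dN_lt agr i /andP[i1 im]; apply: agr; lia.
apply/cvgrPdist_lt => e e0.
have [M _ HM] := near_infty_natSinv_lt (PosNum e0).
near=> l; rewrite sub0r normrN ger0_norm ?dN_ge0 //.
apply: le_lt_trans (HM M (leqnn M)); apply: dN_le_agree.
by near: l; exact: agree.
Unshelve. all: by end_near.
Qed.

End PrefixMetric.

Section LpDistance.
Variables (A : choiceType) (z : A).
Local Notation coord := (@Defs.coord R A).
Local Notation pp := (@Defs.pp R A).

Lemma lp_dist_ge (p : R) (x y : A -> R) c : 0 < p -> c <> z ->
  (`|x c - y c|%:E <= lp_dist z p x y)%E.
Proof.
move=> p0 cz; rewrite /lp_dist; set D := `|x c - y c|.
have single : ((D `^ p)%:E <= esum [set c | c <> z] (fun c => (`|x c - y c| `^ p)%:E))%E.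
  apply: esum_ge; exists [set c]; last by rewrite fsbig_set1.
  by split; [exact: finite_set1 | move=> t ->].
have -> : D%:E = poweR ((D `^ p)%:E) p^-1.
  by rewrite poweR_EFin -powRrM mulfV ?gt_eqF // powRr1 // normr_ge0.
apply: gt0_ler_poweR single; first by rewrite invr_ge0 ltW.
  by rewrite in_itv /= lee_fin powR_ge0 leey.
by rewrite in_itv /= leey andbT; apply: esum_ge0 => t _; rewrite lee_fin powR_ge0.
Qed.

Lemma lp_dist_le (p B : R) (x y : A -> R) : 1 <= p ->
  (forall c, `|x c - y c| <= 1) ->
  (forall s : seq A, uniq s -> \sum_(c <- s) `|x c - y c| <= B) ->
  (lp_dist z p x y <= ((B `^ p^-1)%R)%:E)%E.
Proof.
move=> p1 xy1 sumB; have p0 : 0 < p by apply: lt_le_trans p1.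
have B0 : 0 <= B by have := sumB [::] isT; rewrite big_nil.
have esumB : (esum [set c | c <> z] (fun c => (`|x c - y c| `^ p)%:E) <= B%:E)%E.
  apply: ge_ereal_sup => _ [F [finF _] <-].
  rewrite fsbig_finite // sumEFin lee_fin.
  apply: le_trans (sumB _ (finmap.fset_uniq _)).
  apply: ler_sum => c _; have [->|c0] := eqVneq `|x c - y c| 0.
    by rewrite powR0 ?gt_eqF.
  by apply: ge1r_powR; rewrite // lt_neqAle eq_sym c0 normr_ge0 xy1.
rewrite /lp_dist -(poweR_EFin B); apply: gt0_ler_poweR esumB.
- by rewrite invr_ge0 ltW.
- by rewrite in_itv /= leey andbT; apply: esum_ge0 => t _; rewrite lee_fin powR_ge0.
- by rewrite in_itv /= lee_fin B0 leey.
Qed.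

Lemma sum_coord_term_seq (u : nat -> A) i (s : seq A) : uniq s ->
  \sum_(c <- s) coord_term u c i = if u i \in s then wt i else 0 :> R.
Proof.
elim: s => [|e s IH] /=; first by rewrite big_nil.
move=> /andP[es us]; rewrite big_cons IH // in_cons.
have [ue|ue] /= := eqVneq (u i) e; last by rewrite coord_termF ?add0r // => /eqP; rewrite (negPf ue).
by rewrite coord_termT // ue (negPf es) addr0.
Qed.

Lemma sum_coord_diff_agree (u v : nat -> A) m (s : seq A) :
  agree_below u v m.+1 -> uniq s ->
  \sum_(c <- s) `|coord u c - coord v c| <= 3 * wt m.
Proof.
(* Truncating at N = m + n + 2 makes the n tail errors 2 * 2^-N add up to at most 2^-m. *)
move=> huv us; set n := size s; set N := (m + n.+2)%N.
have kN : (1 <= m.+1 <= N)%N by rewrite /N -addSnnS leq_addr.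
have diff c : `|coord u c - coord v c| <=
    coord_psum u c m.+1 N + coord_psum v c m.+1 N + 2 * wt N.
  have := coord_diff_bounds c kN huv; rewrite !ler_norml.
  have := coord_psum_ge0 u c m.+1 N; have := coord_psum_ge0 v c m.+1 N.
  by move=> ? ? /andP[? ?]; apply/andP; split; lra.
have tail (w : nat -> A) : \sum_(c <- s) coord_psum w c m.+1 N <= wt m.
  rewrite /coord_psum exchange_big /=.
  apply: le_trans (_ : \sum_(m.+1 <= i < N) wt i <= _).
    by apply: ler_sum_nat => i _; rewrite sum_coord_term_seq //; case: ifP => _; rewrite ?wt_ge0.
  rewrite sum_wt; last by rewrite /N; lia.
  by have := wtS m; have := wt_ge0 N; move=> *; lra.
have const : \sum_(c <- s) (2 * wt N) <= wt m.
  have nwt : n%:R * wt n.+1 <= 1.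
    exact: le_trans (ler_wpM2l (ler0n _ n) (wt_le (leqnSn n))) (natr_wt_le1 n).
  rewrite big_const_seq count_predT iter_addr addr0 -/n /N wtD -[X in X <= _]mulr_natl.
  rewrite [wt n.+1]wtS in nwt.
  by have := ler_wpM2l (wt_ge0 m) nwt; move=> *; lra.
apply: le_trans (ler_sum _ (fun c _ => diff c)) _.
rewrite !big_split /=; have := tail u; have := tail v; move=> *; lra.
Qed.

Lemma lp_dist_agree (p : R) (u v : nat -> A) m : 1 <= p -> agree_below u v m.+1 ->
  (lp_dist z p (pp u) (pp v) <= (((3 * wt m) `^ p^-1)%R)%:E)%E.
Proof.
move=> p1 huv; apply: lp_dist_le => // [c|s us]; last exact: sum_coord_diff_agree.
have := coord_ge0 u c; have := coord_le1 u c; have := coord_ge0 v c; have := coord_le1 v c.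
by rewrite /pp ler_norml => *; apply/andP; split; lra.
Qed.

Lemma cvg_lp_coord (p : R) (an : nat -> nat -> A) a : 0 < p -> cvg_lp z p an a ->
  forall d, 0 < d -> \forall l \near \oo, forall c, c <> z -> `|coord (an l) c - coord a c| < d.
Proof.
move=> p0 /fine_cvgP[fin /cvgrPdist_lt cv] d d0; near=> l => c cz.
have dl : `|0 - fine (lp_dist z p (pp (an l)) (pp a))| < d by near: l; exact: cv.
have := lp_dist_ge (pp (an l)) (pp a) p0 cz.
rewrite -(fineK (_ : lp_dist _ _ _ _ \is a fin_num)) ?lee_fin; last by near: l.
by move/le_lt_trans; apply; apply: le_lt_trans dl; rewrite sub0r normrN ler_norm.
Unshelve. all: by end_near.
Qed.

Lemma cvg_lp_of_agree (p : R) (an : nat -> nat -> A) a : 1 <= p ->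
  (forall m, \forall l \near \oo, exists2 v, pp v = pp a & agree_below (an l) v m.+1) ->
  cvg_lp z p an a.
Proof.
move=> p1 agree; have p0 : 0 < p by apply: lt_le_trans p1.
have bound m l : (exists2 v, pp v = pp a & agree_below (an l) v m.+1) ->
    (lp_dist z p (pp (an l)) (pp a) <= (((3 * wt m) `^ p^-1)%R)%:E)%E.
  by move=> [v <-]; exact: lp_dist_agree.
have ge0 l : (0 <= lp_dist z p (pp (an l)) (pp a))%E by exact: poweR_ge0.
have fin m l : (exists2 v, pp v = pp a & agree_below (an l) v m.+1) ->
    lp_dist z p (pp (an l)) (pp a) \is a fin_num.
  by move=> /bound le; rewrite ge0_fin_numE // (le_lt_trans le) ?ltry.
apply/fine_cvgP; split; first by have := agree 0%N; apply: filterS; exact: fin.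
apply/cvgrPdist_le => e e0.
have ep : 0 < e `^ p / 3 by rewrite divr_gt0 ?powR_gt0.
have [M _ HM] := near_wt_lt ep.
near=> l; have agr : exists2 v, pp v = pp a & agree_below (an l) v M.+1.
  by near: l; exact: agree.
rewrite sub0r normrN ger0_norm ?fine_ge0 // -lee_fin fineK ?(fin M) //.
apply: le_trans (bound M l agr) _; rewrite lee_fin.
have -> : e = (e `^ p) `^ p^-1 by rewrite -powRrM mulfV ?gt_eqF ?powRr1 // ltW.
apply: ge0_ler_powR; rewrite ?nnegrE ?invr_ge0 ?ltW ?powR_gt0 ?mulr_gt0 ?wt_gt0 //.
by have := HM M (leqnn M); rewrite ltr_pdivlMr // mulrC.
Unshelve. all: by end_near.
Qed.

End LpDistance.

Section TwoTailed.
Variables (A : choiceType) (z : A) (a : nat -> A) (n0 : nat) (x y : A).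
Hypotheses (n01 : (1 <= n0)%N) (xy : x <> y).
Hypotheses (ax : a n0 = x) (ay : forall k, (n0 < k)%N -> a k = y).
Local Notation coord := (@Defs.coord R A).
Local Notation pp := (@Defs.pp R A).

(* The alternatives (alpha) and (beta) of part (ii) are [tail_pattern u x y m] and
   [tail_pattern u y x m]. *)
Definition tail_pattern (u : nat -> A) e f m :=
  (forall i, (1 <= i <= n0 - 1)%N -> u i = a i) /\ u n0 = e /\
  (forall i, (n0 + 1 <= i <= m)%N -> u i = f).

Lemma two_tail_id : two_tail a n0 x y = a.
Proof.
apply: funext => i; rewrite /two_tail; case: ltngtP => [//|n0i|->//].
by rewrite ay.
Qed.

Lemma pp_two_tail_swap : pp (two_tail a n0 y x) = pp a.
Proof.
by apply: funext => c; rewrite /pp coord_two_tail_swap // two_tail_id.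
Qed.

Lemma tail_patternP u e f m : (n0 <= m)%N ->
  tail_pattern u e f m <-> agree_below u (two_tail a n0 e f) m.+1.
Proof.
move=> n0m; rewrite /two_tail; split=> [[pre [un0 post]] i /andP[i1 im]|agr].
  case: ltngtP => [i_n0|n0i|->//]; first by apply: pre; lia.
  by apply: post; lia.
split=> [i hi|]; first by rewrite agr; [rewrite ifT //|]; lia.
split=> [|i hi]; first by rewrite agr ?ltnn ?eqxx //; lia.
by rewrite agr; [rewrite ifF ?gtn_eqF //|]; lia.
Qed.

Lemma tail_pattern_of_coord_close u m : (n0 < m)%N ->
  (forall c, c <> z -> `|coord u c - coord a c| < wt m.+3) ->
  tail_pattern u x y m \/ tail_pattern u y x m.
Proof.
move=> n0m close.
have prefix : agree_below u a n0.
  apply: agree_below_of_coord_close close _ (_ : (n0 <= n0 < n0.+1)%N) _.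
  - by apply: wt_le; rewrite !ltnS ltnW.
  - by rewrite leqnn ltnSn.
  - by rewrite ax ay.
have const e f i : (n0 < i)%N -> two_tail a n0 e f i.+1 = two_tail a n0 e f i.
  have tail j : (n0 < j)%N -> two_tail a n0 e f j = f.
    by move=> n0j; rewrite /two_tail ltnNge (ltnW n0j) gtn_eqF.
  by move=> n0i; rewrite !tail // ltnW.
have start e f : u n0 = e -> agree_below u (two_tail a n0 e f) n0.+1.
  move=> un0 i /andP[i1]; rewrite ltnS leq_eqVlt /two_tail => /orP[/eqP->|i_n0].
    by rewrite ltnn eqxx.
  by rewrite i_n0; apply: prefix; rewrite i1.
have [uy|uy] := pselect (u n0 = y).
  right; apply/tail_patternP; first exact: ltnW.
  apply: (agree_below_of_coord_close_const (z := z)) (lexx _) (start _ x uy) (const _ _).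
  by move=> c cz; rewrite coord_two_tail_swap // two_tail_id; exact: close.
have ux : u n0 = x.
  rewrite -ax; apply: (eq_of_coord_close (j := n0.+1)) close _ _ prefix _; first by apply: wt_le; lia.
    by rewrite n01 ltnSn.
  by rewrite ay // => /esym.
left; apply/tail_patternP; first exact: ltnW.
rewrite -two_tail_id in close.
exact: agree_below_of_coord_close_const close (lexx _) (start _ y ux) (const _ _).
Qed.

Lemma agree_of_tail_pattern u m : (n0 <= m)%N ->
  tail_pattern u x y m \/ tail_pattern u y x m ->
  exists2 v, pp v = pp a & agree_below u v m.+1.
Proof.
move=> n0m [/(tail_patternP _ _ _ n0m) agr|/(tail_patternP _ _ _ n0m) agr].
  by exists a; rewrite // -[X in agree_below _ X]two_tail_id.
by exists (two_tail a n0 y x); first exact: pp_two_tail_swap.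
Qed.

End TwoTailed.

Lemma not_eventually_constant_pair (A : Type) (a : nat -> A) :
  (forall q, (1 <= q)%N -> ~ (forall k, (q <= k)%N -> a k = a q)) ->
  forall m, exists j1 j2, [/\ (m <= j1)%N, (j1 < j2)%N & a j1 <> a j2].
Proof.
move=> nconst m; have /existsNP[j] := nconst m.+1 (ltn0Sn m).
move=> /not_implyP[mj aj]; exists m.+1, j; split=> //; last exact: nesym.
by rewrite ltn_neqAle mj andbT; apply: contra_notN aj => /eqP->.
Qed.

Section Convergence.
Variables (A : choiceType) (z : A) (p : R) (an : nat -> nat -> A) (a : nat -> A).
Hypothesis p1 : 1 <= p.

Let p0 : 0 < p. Proof. exact: lt_le_trans p1. Qed.

Lemma cvg_lp_iff_cvg_NA :
  (forall q, (1 <= q)%N -> ~ (forall k, (q <= k)%N -> a k = a q)) ->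
  cvg_lp z p an a <-> cvg_NA (R:=R) an a.
Proof.
move=> /not_eventually_constant_pair pair; split=> [lp|/cvg_NAP agree].
  apply/cvg_NAP => m; have [j1 [j2 [mj1 j12 aj]]] := pair m.
  apply: filterS (cvg_lp_coord p0 lp (wt_gt0 j2.+2)) => l close.
  by apply: agree_below_of_coord_close close (lexx _) _ aj; rewrite mj1.
by apply: cvg_lp_of_agree p1 _ => m; apply: filterS (agree m.+1) => l; exists a.
Qed.

Lemma cvg_lp_iff_tail_pattern n0 x y : (1 <= n0)%N -> x <> y -> a n0 = x ->
  (forall k, (n0 < k)%N -> a k = y) ->
  cvg_lp z p an a <->
  (forall m, (n0 + 1 < m)%N -> exists lm, (1 <= lm)%N /\ forall l, (lm <= l)%N ->
     tail_pattern a n0 (an l) x y m \/ tail_pattern a n0 (an l) y x m).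
Proof.
move=> n01 xy ax ay; split=> [lp m n0m|patterns].
  have [L _ HL] := cvg_lp_coord p0 lp (wt_gt0 m.+3).
  exists (maxn L 1); split=> [|l /(leq_trans (leq_maxl _ _)) /HL]; first exact: leq_maxr.
  by apply: tail_pattern_of_coord_close => //; lia.
apply: cvg_lp_of_agree p1 _ => m.
have M_gt : (n0 + 1 < maxn m n0.+2)%N by rewrite leq_max addn1 leqnn orbT.
have [lm [_ Hlm]] := patterns _ M_gt.
exists lm => // l /Hlm pat.
have [v pv agr] : exists2 v, pp (R:=R) v = pp a & agree_below (an l) v (maxn m n0.+2).+1.
  by apply: agree_of_tail_pattern pat => //; lia.
by exists v => //; apply: agree_below_le agr; rewrite ltnS leq_maxl.
Qed.

End Convergence.

End DyadicCoordinates.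

Theorem theorem3p1 (R : realType) (A : choiceType) (z : A) (p : R)
  (hinf : infinite_set [set: A]) (hp : 1 <= p)
  (an : nat -> nat -> A) (a : nat -> A) :
  ((forall q : nat, (1 <= q)%N -> ~ (forall k : nat, (q <= k)%N -> a k = a q)) ->
     (cvg_lp z p an a <-> cvg_NA (R:=R) an a))
  /\
  (forall (n0 : nat) (x y : A), (2 <= n0)%N -> x <> y ->
     a n0 = x -> (forall k : nat, (n0 < k)%N -> a k = y) ->
     (cvg_lp z p an a <->
      (forall m : nat, (n0 + 1 < m)%N ->
         exists lm : nat, (1 <= lm)%N /\
           forall l : nat, (lm <= l)%N ->
             ((forall i, (1 <= i <= n0 - 1)%N -> an l i = a i) /\ an l n0 = x /\
              (forall i, (n0 + 1 <= i <= m)%N -> an l i = y))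
             \/
             ((forall i, (1 <= i <= n0 - 1)%N -> an l i = a i) /\ an l n0 = y /\
              (forall i, (n0 + 1 <= i <= m)%N -> an l i = x))))).
Proof.
split; first exact: cvg_lp_iff_cvg_NA.
by move=> n0 x y n02; apply: cvg_lp_iff_tail_pattern => //; exact: ltnW.
Qed.
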